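(* In the setting of the context, assume $(n_k)$ is a stabilizing subsequence with limit parameters $(\pi_m)$, $(\eta_{m,j})$. Then for each integer $j\ge1$, the distribution under $\nu$ of $f^{(jq_{n_k})}-jh_{n_k+1}$ (which equals $g_{n_k+1}^{(j,S^{q_{n_k}})}$) converges weakly, as a probability on $\mathbb Z$, to $P_j$ as $k\to\infty$.
   Context: Odometer: integers $p_n\ge2$, $q_0=1$, $q_n=p_1\cdots p_n$; $Y=\prod_{n\ge1}\{0,\dots,p_n-1\}$ with product of uniform measures $\nu$; $S$ adds $(1,0,0,\dots)$ with carry to the right. $D^{(n)}_0=\{y:y_1=\dots=y_n=0\}$, $D^{(n)}_i=S^iD^{(n)}_0$ ($0\le i<q_n$), $\mathcal D_n$ the partition into these sets. Morse-type function: $f=1+\sum_{n\ge1}s_n$, integrable, where $s_n:Y\to\{0,1,2,\dots\}$ is $\mathcal D_n$-measurable and (for $n\ge2$) vanishes outside $D^{(n-1)}_{q_{n-1}-1}$; $s_{n,j}$ ($0\le j\le p_n-1$) denotes the value of $s_n$ on $D^{(n)}_{(j+1)q_{n-1}-1}$. $h_1=1$, $h_{n+1}=p_nh_n+\sum_js_{n,j}$. For $g:Y\to\mathbb Z$, $g^{(m)}=g^{(m,S)}=\sum_{i=0}^{m-1}g\circ S^i$, and $g^{(j,S^{q})}=\sum_{i=0}^{j-1}g\circ S^{iq}$. $f_{n+1}=\sum_{m\ge n+1}s_m$, and $g_{n+1}(y)=f_{n+1}(S^iy)$ with $0\le i<q_n$ the unique index such that $S^iy\in D^{(n)}_{q_n-1}$.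 Stabilizing subsequence: increasing $(n_k)$ with $p_{n_k+m}\to\pi_m$ and $s_{n_k+m,j}\to\eta_{m,j}$ for all $m\in\mathbb Z$, $0\le j\le\pi_m-1$. Limit model: $\overline Y=\prod_{m\ge1}\{0,\dots,\pi_m-1\}$ with product uniform measure $\overline\nu$ and odometer $\overline S$ (add $1$ to first coordinate with carry to the right); $\gamma(\overline y)=\sum_{m=1}^{\overline t(\overline y)}\eta_{m,\overline y_m}$, where $\overline t(\overline y)$ is the smallest $t\ge1$ with $\overline y_t<\pi_t-1$; $P_j$ is the distribution under $\overline\nu$ of $\gamma+\gamma\circ\overline S+\dots+\gamma\circ\overline S^{j-1}$. *)

From Stdlib Require Import Reals ZArith Arith List.
Import ListNotations.
Open Scope R_scope.

(* Points of Y = prod_{n>=1} {0,..,p_n - 1} are sequences y : nat -> nat;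
   coordinate 0 is unused, coordinates are y 1, y 2, ... *)

Fixpoint rsum (n : nat) (g : nat -> R) : R :=
  match n with O => 0 | S n' => rsum n' g + g n' end.

Definition nsum (lo len : nat) (g : nat -> nat) : nat :=
  fold_right Nat.add 0%nat (map g (seq lo len)).

Definition all_max (p : nat -> nat) (y : nat -> nat) (k : nat) : bool :=
  forallb (fun i => Nat.eqb (y i) (p i - 1)) (seq 1 (k - 1)).

(* The odometer S: add 1 to the first coordinate with carry to the right.
   Coordinate k (k>=1) receives a carry iff all coordinates 1..k-1 are maximal. *)
Definition odo (p : nat -> nat) (y : nat -> nat) : nat -> nat :=
  fun k => if Nat.eqb k 0 then y k
           else if all_max p y k then ((y k + 1) mod (p k))%nat else y k.

Definition birkhoff (T : (nat -> nat) -> (nat -> nat)) (g : (nat -> nat) -> nat)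
  (L : nat) (y : nat -> nat) : nat :=
  nsum 0 L (fun i => g (Nat.iter i T y)).

Fixpoint q (p : nat -> nat) (n : nat) : nat :=
  match n with O => 1%nat | S n' => (q p n' * p n)%nat end.

(* The D_m-measurable function s_m vanishing outside D^{(m-1)}_{q_{m-1}-1},
   with value s m j on D^{(m)}_{(j+1)q_{m-1}-1} = {y_1..y_{m-1} maximal, y_m = j}. *)
Definition smorse (p : nat -> nat) (s : nat -> nat -> nat) (m : nat)
  (y : nat -> nat) : nat :=
  if all_max p y m then s m (y m) else 0%nat.

(* Truncation f_N = 1 + sum_{m=1}^N s_m  (f_N increases to f) *)
Definition f_trunc (p : nat -> nat) (s : nat -> nat -> nat) (N : nat)
  (y : nat -> nat) : nat :=
  (1 + nsum 1 N (fun m => smorse p s m y))%nat.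

(* hh n = h_{n+1}:  h_1 = 1, h_{n+1} = p_n h_n + sum_j s_{n,j} *)
Fixpoint hh (p : nat -> nat) (s : nat -> nat -> nat) (n : nat) : nat :=
  match n with
  | O => 1%nat
  | S n' => (p n * hh p s n' + nsum 0 (p n) (s n))%nat
  end.

Definition upd (y : nat -> nat) (k a : nat) : nat -> nat :=
  fun i => if Nat.eqb i k then a else y i.

(* Integral w.r.t. the uniform product measure over coordinates 1..N of a
   function depending only on those coordinates. *)
Fixpoint avg (p : nat -> nat) (N : nat) (F : (nat -> nat) -> R) : R :=
  match N with
  | O => F (fun _ => 0%nat)
  | S N' => avg p N' (fun y => / INR (p N) * rsum (p N) (fun a => F (upd y N a)))
  end.

Definition prob (p : nat -> nat) (N : nat) (E : (nat -> nat) -> bool) : R :=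
  avg p N (fun y => if E y then 1 else 0).

(* Truncation at level N of  f^{(j q_n)} - j h_{n+1} *)
Definition X_trunc (p : nat -> nat) (s : nat -> nat -> nat) (n j N : nat)
  (y : nat -> nat) : Z :=
  (Z.of_nat (birkhoff (odo p) (f_trunc p s N) (j * q p n) y)
   - Z.of_nat (j * hh p s n))%Z.

Definition pibar (pi : Z -> nat) : nat -> nat := fun m => pi (Z.of_nat m).
Definition etabar (eta : Z -> nat -> nat) : nat -> nat -> nat :=
  fun m a => eta (Z.of_nat m) a.

(* gamma_N = sum_{m=1}^{min(tbar,N)} eta_{m, ybar_m}, increasing to gamma *)
Definition gamma_trunc (pi : Z -> nat) (eta : Z -> nat -> nat) (N : nat)
  (y : nat -> nat) : nat :=
  nsum 1 N (fun m => smorse (pibar pi) (etabar eta) m y).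

(* Truncation of gamma + gamma o Sbar + ... + gamma o Sbar^{j-1} *)
Definition Gamma_trunc (pi : Z -> nat) (eta : Z -> nat -> nat) (j N : nat)
  (y : nat -> nat) : Z :=
  Z.of_nat (birkhoff (odo (pibar pi)) (gamma_trunc pi eta N) j y).

(* Write GammaM(P,V,j,M) for the Birkhoff sum over j steps of the odometer with
   digit sizes P of the truncated cocycle gamma_M = sum_{m<=M} s_m (the s_m
   built from the values V), and law_trunc(P,V,j,M,z) for the probability that it
   equals z.  The proof has three ingredients.
   1. Renormalization (combinatorics): after j*q_n odometer steps every block of
      the first n coordinates has been traversed, so on every point
      f_N^{(j q_n)} - j h_{n+1} equals GammaM for the parameters shifted by n,
      evaluated at the tail of the point.  As the tail is again uniformly
      distributed, nu(X_N = z) = law_trunc(shift p n, shift s n, j, N - n, z).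
   2. Uniform truncation estimate (measure): GammaM at level N and at level
      M <= N differ only if one of j odometer iterates has its first M digits
      maximal; by invariance of the measure this has probability <= j 2^{-M}.
      Hence both sequences of laws converge, at the explicit rate j 2^{-M}.
   3. Locality: law_trunc(P,V,j,M,z) only depends on the first M entries of P, V,
      and along the stabilizing subsequence these agree with pi, eta for k
      large.  An epsilon/2 argument then gives convergence of the masses. *)

From Stdlib Require Import Reals ZArith Arith List.
From Stdlib Require Import Lia Lra FunctionalExtensionality IndefiniteDescription.
Open Scope R_scope.

(** * Finite sums *)

Section NatSums.
Local Open Scope nat_scope.

Lemma nsum_S_l lo len g : nsum lo (S len) g = g lo + nsum (S lo) len g.
Proof. reflexivity. Qed.

Lemma nsum_S_r lo len g : nsum lo (S len) g = nsum lo len g + g (lo + len).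
Proof.
  unfold nsum. rewrite seq_S, map_app, fold_right_app. simpl.
  generalize (g (lo + len)).
  induction (map g (seq lo len)) as [|a l IH]; intros; simpl; [lia|].
  rewrite IH. lia.
Qed.

Lemma nsum_ext lo len g h : (forall i, lo <= i < lo + len -> g i = h i) ->
  nsum lo len g = nsum lo len h.
Proof.
  revert lo. induction len as [|len IH]; intros lo H; [reflexivity|].
  rewrite !nsum_S_l, (H lo), (IH (S lo)); auto; [intros; apply H|]; lia.
Qed.

Lemma nsum_shift lo len g : nsum (S lo) len g = nsum lo len (fun m => g (S m)).
Proof. revert lo. induction len as [|len IH]; intros; [reflexivity|]. rewrite !nsum_S_l, IH. reflexivity. Qed.

Lemma nsum_from_0 lo len g : nsum lo len g = nsum 0 len (fun i => g (lo + i)).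
Proof. revert g. induction lo as [|lo IH]; intros; [reflexivity|]. rewrite nsum_shift, IH. reflexivity. Qed.

Lemma nsum_add lo len g h : nsum lo len (fun i => g i + h i) = nsum lo len g + nsum lo len h.
Proof. revert lo; induction len as [|len IH]; intros; [reflexivity|]. rewrite !nsum_S_l, IH. lia. Qed.

Lemma nsum_const lo len c : nsum lo len (fun _ => c) = len * c.
Proof. revert lo; induction len as [|len IH]; intros; [reflexivity|]. rewrite nsum_S_l, IH. lia. Qed.

Lemma nsum_app lo a b g : nsum lo (a + b) g = nsum lo a g + nsum (lo + a) b g.
Proof.
  revert lo; induction a as [|a IH]; intros; simpl; [rewrite Nat.add_0_r; reflexivity|].
  rewrite !nsum_S_l, IH. replace (S lo + a) with (lo + S a) by lia. lia.
Qed.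

Lemma nsum_single n r0 h : r0 < n -> (forall r, r < n -> r <> r0 -> h r = 0) ->
  nsum 0 n h = h r0.
Proof.
  induction n as [|n IH]; intros Hr H; [lia|]. rewrite nsum_S_r. simpl.
  destruct (Nat.eq_dec r0 n) as [->|Hne].
  - rewrite (nsum_ext 0 n h (fun _ => 0)), nsum_const; [lia|]. intros; apply H; lia.
  - rewrite IH, (H n); try lia. intros; apply H; lia.
Qed.

Lemma nsum_rot n c g : nsum 0 n (fun r => g ((c + r) mod n)) = nsum 0 n g.
Proof.
  destruct n as [|n']; [reflexivity|]. set (n := S n').
  induction c as [|c IH].
  - apply nsum_ext. intros i Hi. rewrite Nat.add_0_l, Nat.mod_small; unfold n in *; lia.
  - set (h := fun r => g ((c + r) mod n)) in *.
    assert (Hsplit : nsum 0 (S n) h = h 0 + nsum 0 n (fun r => h (S r))).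
    { rewrite nsum_S_l, nsum_shift. reflexivity. }
    rewrite nsum_S_r in Hsplit. simpl in Hsplit.
    assert (Hper : h n = h 0).
    { unfold h. rewrite Nat.add_0_r. replace (c + n) with (c + 1 * n) by lia.
      rewrite Nat.Div0.mod_add. reflexivity. }
    rewrite (nsum_ext 0 n (fun r => g ((S c + r) mod n)) (fun r => h (S r))); [lia|].
    intros; unfold h. do 2 f_equal. lia.
Qed.

End NatSums.

Lemma rsum_front n g : rsum (S n) g = g 0%nat + rsum n (fun i => g (S i)).
Proof. induction n as [|n IH]; simpl in *; [lra|]. rewrite IH. lra. Qed.

Lemma rsum_ext n g h : (forall i, (i < n)%nat -> g i = h i) -> rsum n g = rsum n h.
Proof.
  induction n as [|n IH]; intros H; simpl; [reflexivity|].
  rewrite IH, H; [reflexivity|lia|intros; apply H; lia].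
Qed.

Lemma rsum_lin n a b g h : rsum n (fun i => a * g i + b * h i) = a * rsum n g + b * rsum n h.
Proof. induction n as [|n IH]; simpl; [lra|]. rewrite IH. lra. Qed.

Lemma rsum_const n c : rsum n (fun _ => c) = INR n * c.
Proof. induction n as [|n IH]; [simpl; lra|]. simpl rsum. rewrite IH, S_INR. lra. Qed.

Lemma rsum_le n g h : (forall i, (i < n)%nat -> g i <= h i) -> rsum n g <= rsum n h.
Proof.
  induction n as [|n IH]; intros H; simpl; [lra|].
  apply Rplus_le_compat; [apply IH; intros|]; apply H; lia.
Qed.

Lemma rsum_nonneg n g : (forall i, (i < n)%nat -> 0 <= g i) -> 0 <= rsum n g.
Proof. intros H. rewrite <- (Rmult_0_r (INR n)), <- rsum_const. apply rsum_le. exact H. Qed.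

Lemma rsum_ge_term n g i : (forall k, (k < n)%nat -> 0 <= g k) -> (i < n)%nat -> g i <= rsum n g.
Proof.
  induction n as [|n IH]; intros H Hi; [lia|]. simpl.
  assert (0 <= rsum n g) by (apply rsum_nonneg; intros; apply H; lia).
  assert (0 <= g n) by (apply H; lia).
  destruct (Nat.eq_dec i n) as [->|Hne]; [lra|].
  assert (g i <= rsum n g) by (apply IH; [intros; apply H|]; lia). lra.
Qed.

Lemma rsum_rot1 n g : rsum n (fun a => g ((a + 1) mod n)%nat) = rsum n g.
Proof.
  destruct n as [|n']; [reflexivity|].
  change (rsum (S n') (fun a => g ((a + 1) mod S n')%nat)) with
    (rsum n' (fun a => g ((a + 1) mod S n')%nat) + g ((n' + 1) mod S n')%nat).
  rewrite (rsum_front n' g).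
  replace ((n' + 1) mod S n')%nat with 0%nat.
  2:{ replace (n' + 1)%nat with (0 + 1 * S n')%nat by lia.
      rewrite Nat.Div0.mod_add, Nat.Div0.mod_0_l. reflexivity. }
  rewrite (rsum_ext n' _ (fun i => g (S i))); [lra|].
  intros i Hi. f_equal. rewrite Nat.mod_small; lia.
Qed.

(** * Coordinates, tails and the odometer *)

Section Odometer.
Local Open Scope nat_scope.

(* Dropping the first coordinate; coordinate 0 is unused and reset to 0. *)
Definition tail1 (y : nat -> nat) : nat -> nat := fun m => if Nat.eqb m 0 then 0 else y (S m).
Definition shift_seq {A} (f : nat -> A) (n : nat) : nat -> A := fun m => f (n + m).
Fixpoint tailn (n : nat) (y : nat -> nat) : nat -> nat :=
  match n with O => y | S n' => tailn n' (tail1 y) end.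

Lemma bool_iff (a b : bool) : (a = true <-> b = true) -> a = b.
Proof. destruct a, b; intuition congruence. Qed.

Lemma all_max_spec p y k : all_max p y k = true <-> (forall i, 1 <= i < k -> y i = p i - 1).
Proof.
  unfold all_max. rewrite forallb_forall. split.
  - intros H i Hi. apply Nat.eqb_eq, H, in_seq. lia.
  - intros H x Hx. apply in_seq in Hx. apply Nat.eqb_eq, H. lia.
Qed.

Lemma all_max_ext p p' y y' k :
  (forall i, 1 <= i < k -> p i = p' i /\ y i = y' i) -> all_max p y k = all_max p' y' k.
Proof.
  intros H. apply bool_iff. rewrite !all_max_spec.
  split; intros G i Hi; destruct (H i Hi) as [Hp Hy];
    [rewrite <- Hp, <- Hy | rewrite Hp, Hy]; apply G; exact Hi.
Qed.

Lemma all_max_upd p y k a : all_max p (upd y k a) k = all_max p y k.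
Proof.
  apply all_max_ext. intros i Hi. split; [reflexivity|].
  unfold upd. destruct (Nat.eqb_spec i k); [lia|reflexivity].
Qed.

Lemma all_max_tail p y m : all_max p y (S (S m)) =
  (Nat.eqb (y 1) (p 1 - 1) && all_max (shift_seq p 1) (tail1 y) (S m))%bool.
Proof.
  apply bool_iff. rewrite Bool.andb_true_iff, !all_max_spec, Nat.eqb_eq. split.
  - intros H. split; [apply H; lia|]. intros [|i] Hi; [lia|]. apply H. lia.
  - intros [H1 H] i Hi. destruct (Nat.eq_dec i 1) as [->|Hne]; auto.
    destruct i as [|[|i]]; [lia|lia|]. apply (H (S i)). lia.
Qed.

Lemma all_max_mono p y k k' : k <= k' -> all_max p y k' = true -> all_max p y k = true.
Proof. rewrite !all_max_spec. intros H1 H i Hi. apply H; lia. Qed.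

Lemma all_max_last p y k : 1 <= k ->
  all_max p y (S k) = (all_max p y k && Nat.eqb (y k) (p k - 1))%bool.
Proof.
  intros Hk. apply bool_iff. rewrite Bool.andb_true_iff, !all_max_spec, Nat.eqb_eq. split.
  - intros H. split; [intros; apply H|apply H]; lia.
  - intros [H1 H2] i Hi. destruct (Nat.eq_dec i k) as [->|]; auto. apply H1; lia.
Qed.

Lemma odo_nocarry p y : y 1 <> p 1 - 1 -> tail1 (odo p y) = tail1 y.
Proof.
  intros H. apply functional_extensionality. intros m. unfold tail1.
  destruct (Nat.eqb_spec m 0); auto. unfold odo. simpl.
  destruct (all_max p y (S m)) eqn:E; auto. apply all_max_spec with (i := 1) in E; lia.
Qed.

Lemma odo_carry p y : y 1 = p 1 - 1 -> tail1 (odo p y) = odo (shift_seq p 1) (tail1 y).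
Proof.
  intros H. apply functional_extensionality. intros [|m]; [reflexivity|].
  unfold tail1, odo. simpl. destruct m; rewrite all_max_tail, (proj2 (Nat.eqb_eq _ _) H); reflexivity.
Qed.

Lemma iter_first p y r : y 1 < p 1 -> Nat.iter r (odo p) y 1 = (y 1 + r) mod p 1.
Proof.
  intros Hy. induction r as [|r IH].
  - simpl. rewrite Nat.add_0_r, Nat.mod_small; auto.
  - simpl Nat.iter. unfold odo at 1. simpl. rewrite IH, Nat.Div0.add_mod_idemp_l. f_equal. lia.
Qed.

Lemma iter_tail_stable p x t : (forall r, r < t -> Nat.iter r (odo p) x 1 <> p 1 - 1) ->
  tail1 (Nat.iter t (odo p) x) = tail1 x.
Proof.
  induction t as [|t IH]; intros H; simpl; auto.
  rewrite odo_nocarry; [apply IH; intros|]; apply H; lia.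
Qed.

Lemma block_pre p y r : y 1 < p 1 -> r <= p 1 - 1 - y 1 -> tail1 (Nat.iter r (odo p) y) = tail1 y.
Proof.
  intros Hy Hr. apply iter_tail_stable. intros r' Hr'. rewrite iter_first by auto.
  rewrite Nat.mod_small; lia.
Qed.

Lemma block_end_first p y : y 1 < p 1 -> Nat.iter (p 1) (odo p) y 1 = y 1.
Proof.
  intros Hy. rewrite iter_first by auto. replace (y 1 + p 1) with (y 1 + 1 * p 1) by lia.
  rewrite Nat.Div0.mod_add, Nat.mod_small; auto.
Qed.

Lemma block_end_tail p y : y 1 < p 1 ->
  tail1 (Nat.iter (p 1) (odo p) y) = odo (shift_seq p 1) (tail1 y).
Proof.
  intros Hy. set (r0 := p 1 - 1 - y 1).
  replace (p 1) with (y 1 + S r0) by (unfold r0; lia).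
  rewrite Nat.iter_add, iter_tail_stable.
  - simpl. rewrite odo_carry.
    + rewrite block_pre by (auto; unfold r0; lia). reflexivity.
    + rewrite iter_first, Nat.mod_small; unfold r0; lia.
  - intros r Hr. rewrite <- Nat.iter_add, iter_first by auto.
    replace (y 1 + (r + S r0)) with (r + 1 * p 1) by (unfold r0; lia).
    rewrite Nat.Div0.mod_add, Nat.mod_small; lia.
Qed.

End Odometer.

(** * Renormalization of the Birkhoff sums *)

Section Renormalization.
Local Open Scope nat_scope.

Definition gammaM (P : nat -> nat) (V : nat -> nat -> nat) (M : nat) (x : nat -> nat) : nat :=
  nsum 1 M (fun m => smorse P V m x).
Definition GammaM (P : nat -> nat) (V : nat -> nat -> nat) (j M : nat) (b : nat -> nat) : nat :=
  birkhoff (odo P) (gammaM P V M) j b.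

Lemma birkhoff_add T g a b y :
  birkhoff T g (a + b) y = birkhoff T g a y + birkhoff T g b (Nat.iter a T y).
Proof.
  unfold birkhoff. rewrite nsum_app, (nsum_from_0 (0 + a)). f_equal.
  apply nsum_ext. intros i _. f_equal. rewrite Nat.add_comm, Nat.iter_add. reflexivity.
Qed.

Lemma birkhoff_S T g L y : birkhoff T g (S L) y = g y + birkhoff T g L (T y).
Proof.
  change (S L) with (1 + L). rewrite (birkhoff_add T g 1 L y). unfold birkhoff, nsum. simpl. lia.
Qed.

Lemma birkhoff_f_trunc T P V M j b :
  birkhoff T (f_trunc P V M) j b = j + birkhoff T (gammaM P V M) j b.
Proof.
  unfold birkhoff. rewrite (nsum_ext 0 j _ (fun i => 1 + gammaM P V M (Nat.iter i T b))) by reflexivity.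
  rewrite nsum_add, nsum_const. lia.
Qed.

Lemma f_trunc_split p s N x : f_trunc p s (S N) x =
  1 + s 1 (x 1) + (if Nat.eqb (x 1) (p 1 - 1)
                   then gammaM (shift_seq p 1) (shift_seq s 1) N (tail1 x) else 0).
Proof.
  unfold f_trunc, gammaM. rewrite nsum_S_l, nsum_shift.
  change (smorse p s 1 x) with (s 1 (x 1)).
  destruct (Nat.eqb (x 1) (p 1 - 1)) eqn:E.
  - rewrite (nsum_ext 1 N _ (fun m => smorse (shift_seq p 1) (shift_seq s 1) m (tail1 x))); [lia|].
    intros [|m] Hm; [lia|]. unfold smorse. rewrite all_max_tail, E. reflexivity.
  - rewrite (nsum_ext 1 N _ (fun _ => 0)), nsum_const; [lia|].
    intros [|m] Hm; [lia|]. unfold smorse. rewrite all_max_tail, E. reflexivity.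
Qed.

Lemma block_sum p s N y : y 1 < p 1 ->
  nsum 0 (p 1) (fun r => f_trunc p s (S N) (Nat.iter r (odo p) y)) =
  (p 1 - 1 + nsum 0 (p 1) (s 1)) + f_trunc (shift_seq p 1) (shift_seq s 1) N (tail1 y).
Proof.
  intros Hy. pose (G := gammaM (shift_seq p 1) (shift_seq s 1) N).
  rewrite (nsum_ext 0 (p 1) _ (fun r => (1 + s 1 ((y 1 + r) mod p 1)) +
      (if Nat.eqb ((y 1 + r) mod p 1) (p 1 - 1) then G (tail1 (Nat.iter r (odo p) y)) else 0)))
    by (intros r _; rewrite f_trunc_split, iter_first by auto; reflexivity).
  rewrite !nsum_add, nsum_const, (nsum_rot (p 1) (y 1) (s 1)).
  set (r0 := p 1 - 1 - y 1).
  rewrite (nsum_single (p 1) r0 (fun r => if Nat.eqb ((y 1 + r) mod p 1) (p 1 - 1)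
                                           then G (tail1 (Nat.iter r (odo p) y)) else 0)).
  - rewrite block_pre by (auto; unfold r0; lia). rewrite Nat.mod_small by (unfold r0; lia).
    replace (y 1 + r0) with (p 1 - 1) by (unfold r0; lia). rewrite Nat.eqb_refl.
    unfold f_trunc, G, gammaM. lia.
  - unfold r0; lia.
  - intros r Hr Hne. destruct (Nat.eqb_spec ((y 1 + r) mod p 1) (p 1 - 1)) as [E|]; auto.
    exfalso. apply Hne. destruct (Nat.lt_ge_cases (y 1 + r) (p 1)).
    + rewrite Nat.mod_small in E; unfold r0; lia.
    + replace (y 1 + r) with ((y 1 + r - p 1) + 1 * p 1) in E by lia.
      rewrite Nat.Div0.mod_add, Nat.mod_small in E; lia.
Qed.

(* p_1 * L steps on Y are L steps on the tail, plus L complete turns. *)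
Lemma renormalize_one p s N L y : y 1 < p 1 ->
  birkhoff (odo p) (f_trunc p s (S N)) (p 1 * L) y =
  L * (p 1 - 1 + nsum 0 (p 1) (s 1)) +
  birkhoff (odo (shift_seq p 1)) (f_trunc (shift_seq p 1) (shift_seq s 1) N) L (tail1 y).
Proof.
  revert y. induction L as [|L IH]; intros y Hy; [rewrite Nat.mul_0_r; reflexivity|].
  replace (p 1 * S L) with (p 1 + p 1 * L) by lia.
  rewrite birkhoff_add, IH by (rewrite block_end_first; auto).
  rewrite block_end_tail, birkhoff_S by auto.
  unfold birkhoff at 1. rewrite block_sum by auto. lia.
Qed.

Lemma q_front p n : q p (S n) = p 1 * q (shift_seq p 1) n.
Proof.
  induction n as [|n IH]; [simpl; lia|].
  change (q p (S (S n))) with (q p (S n) * p (S (S n))). rewrite IH.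
  change (q (shift_seq p 1) (S n)) with (q (shift_seq p 1) n * p (S (S n))). lia.
Qed.

Lemma hh_front p s n : 1 <= p 1 ->
  hh p s (S n) = q (shift_seq p 1) n * (p 1 - 1 + nsum 0 (p 1) (s 1))
                 + hh (shift_seq p 1) (shift_seq s 1) n.
Proof.
  intros Hp. induction n as [|n IH]; [simpl; lia|].
  change (hh p s (S (S n))) with (p (S (S n)) * hh p s (S n) + nsum 0 (p (S (S n))) (s (S (S n)))).
  change (q (shift_seq p 1) (S n)) with (q (shift_seq p 1) n * p (S (S n))).
  change (hh (shift_seq p 1) (shift_seq s 1) (S n)) with
    (p (S (S n)) * hh (shift_seq p 1) (shift_seq s 1) n + nsum 0 (p (S (S n))) (s (S (S n)))).
  rewrite IH. nia.
Qed.

Lemma renormalize n : forall p s N j y, (forall m, 1 <= m <= n -> 1 <= p m /\ y m < p m) -> n <= N ->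
  birkhoff (odo p) (f_trunc p s N) (j * q p n) y =
  j * hh p s n + GammaM (shift_seq p n) (shift_seq s n) j (N - n) (tailn n y).
Proof.
  induction n as [|n IH]; intros p s N j y Hg HN.
  - simpl. change (shift_seq p 0) with p. change (shift_seq s 0) with s.
    rewrite Nat.mul_1_r, Nat.sub_0_r, birkhoff_f_trunc. unfold GammaM. lia.
  - destruct N as [|N]; [lia|].
    rewrite q_front. replace (j * (p 1 * q (shift_seq p 1) n)) with (p 1 * (j * q (shift_seq p 1) n)) by lia.
    assert (Htail : forall m, 1 <= m <= n -> 1 <= shift_seq p 1 m /\ tail1 y m < shift_seq p 1 m).
    { intros [|m] Hm; [lia|]. unfold shift_seq, tail1. simpl. apply Hg. lia. }
    rewrite renormalize_one by (apply Hg; lia).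
    rewrite IH by (exact Htail || lia).
    rewrite hh_front by (apply Hg; lia).
    simpl tailn. change (S N - S n) with (N - n).
    change (shift_seq (shift_seq p 1) n) with (shift_seq p (S n)).
    change (shift_seq (shift_seq s 1) n) with (shift_seq s (S n)). nia.
Qed.

Lemma X_trunc_renormalize p s n j N y : (forall m, 1 <= m <= n -> 1 <= p m /\ y m < p m) -> n <= N ->
  X_trunc p s n j N y = Z.of_nat (GammaM (shift_seq p n) (shift_seq s n) j (N - n) (tailn n y)).
Proof. intros Hg HN. unfold X_trunc. rewrite renormalize by auto. lia. Qed.

End Renormalization.

(** * The uniform product measure *)

Section Measure.

Definition indR (b : bool) : R := if b then 1 else 0.

Definition agree (M : nat) (y y' : nat -> nat) : Prop :=
  forall i, (1 <= i <= M)%nat -> y i = y' i.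
Definition depends_on (M : nat) (F : (nat -> nat) -> R) : Prop :=
  forall y y', agree M y y' -> F y = F y'.
Definition digits_in (P : nat -> nat) (N : nat) (y : nat -> nat) : Prop :=
  forall m, (1 <= m <= N)%nat -> (y m < P m)%nat.

Lemma agree_upd M y a : agree M (upd y (S M) a) y.
Proof. intros i Hi. unfold upd. destruct (Nat.eqb_spec i (S M)); [lia|reflexivity]. Qed.

Lemma inv_INR_nonneg n : 0 <= / INR n.
Proof.
  destruct n; [simpl; rewrite Rinv_0; lra|]. left. apply Rinv_pos, lt_0_INR. lia.
Qed.

Lemma avg_ext_digits P N : forall F G, (forall y, digits_in P N y -> F y = G y) ->
  avg P N F = avg P N G.
Proof.
  induction N as [|N IH]; intros F G H; simpl.
  - apply H. intros m Hm; lia.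
  - apply IH. intros y Hy. f_equal. apply rsum_ext. intros a Ha. apply H.
    intros m Hm. unfold upd. destruct (Nat.eqb_spec m (S N)) as [->|]; auto. apply Hy; lia.
Qed.

Lemma avg_ext P N F G : (forall y, F y = G y) -> avg P N F = avg P N G.
Proof. intros H; apply avg_ext_digits; auto. Qed.

Lemma avg_lin P N : forall a b F G,
  avg P N (fun y => a * F y + b * G y) = a * avg P N F + b * avg P N G.
Proof.
  induction N as [|N IH]; intros a b F G; simpl; [reflexivity|].
  rewrite <- IH. apply avg_ext. intros y. rewrite rsum_lin. ring.
Qed.

Lemma avg_le P N : forall F G, (forall y, F y <= G y) -> avg P N F <= avg P N G.
Proof.
  induction N as [|N IH]; intros F G H; simpl; [apply H|].
  apply IH. intros y. apply Rmult_le_compat_l; [apply inv_INR_nonneg|].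
  apply rsum_le. intros; apply H.
Qed.

Lemma avg_abs_diff_le P N F G H : (forall y, Rabs (F y - G y) <= H y) ->
  Rabs (avg P N F - avg P N G) <= avg P N H.
Proof.
  intros Hb.
  replace (avg P N F - avg P N G) with (avg P N (fun y => 1 * F y + (-1) * G y))
    by (rewrite avg_lin; ring).
  apply Rabs_le. split.
  - replace (- avg P N H) with (avg P N (fun y => (-1) * H y + 0 * H y)) by (rewrite avg_lin; ring).
    apply avg_le. intros y. specialize (Hb y).
    pose proof (Rle_abs (- (F y - G y))). rewrite Rabs_Ropp in *. lra.
  - apply avg_le. intros y. specialize (Hb y). pose proof (Rle_abs (F y - G y)). lra.
Qed.

Lemma avg_rsum P N j (F : nat -> (nat -> nat) -> R) :
  avg P N (fun y => rsum j (fun l => F l y)) = rsum j (fun l => avg P N (F l)).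
Proof.
  induction j as [|j IH]; simpl.
  - transitivity (0 * avg P N (fun _ => 0) + 0 * avg P N (fun _ => 0)); [|ring].
    rewrite <- avg_lin. apply avg_ext. intros; ring.
  - rewrite <- IH, <- (Rmult_1_l (avg P N (F j))),
      <- (Rmult_1_l (avg P N (fun y => rsum j (fun l => F l y)))), <- avg_lin.
    apply avg_ext. intros; ring.
Qed.

Lemma avg_extend P M F : depends_on M F -> (forall m, (1 <= m)%nat -> (1 <= P m)%nat) ->
  forall d, avg P (d + M) F = avg P M F.
Proof.
  intros HF HP d. induction d as [|d IH]; [reflexivity|].
  simpl plus. simpl avg. rewrite <- IH. apply avg_ext. intros y.
  rewrite (rsum_ext _ _ (fun _ => F y)), rsum_const.
  - field. apply not_0_INR. specialize (HP (S (d + M))). lia.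
  - intros a _. apply HF. intros i Hi. apply agree_upd. lia.
Qed.

Lemma odo_agree P M y y' : agree M y y' -> agree M (odo P y) (odo P y').
Proof.
  intros H i Hi. unfold odo. destruct (Nat.eqb i 0); auto.
  rewrite (all_max_ext P P y y' i), H by (lia || (intros; split; [|apply H]; lia)).
  reflexivity.
Qed.

Lemma iter_agree P M l y y' : agree M y y' -> agree M (Nat.iter l (odo P) y) (Nat.iter l (odo P) y').
Proof. induction l; simpl; auto. intros; apply odo_agree; auto. Qed.

Lemma odo_upd_last P M y a : agree (S M) (odo P (upd y (S M) a))
  (upd (odo P y) (S M) (if all_max P y (S M) then ((a + 1) mod P (S M))%nat else a)).
Proof.
  intros i Hi. unfold upd at 2. destruct (Nat.eqb_spec i (S M)) as [->|Hne].
  - unfold odo. simpl Nat.eqb. rewrite all_max_upd. unfold upd. rewrite Nat.eqb_refl. reflexivity.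
  - apply (odo_agree P M); [apply agree_upd|lia].
Qed.

Lemma avg_odo P M : forall E, depends_on M E -> avg P M (fun y => E (odo P y)) = avg P M E.
Proof.
  induction M as [|M IH]; intros E HE.
  - simpl. apply HE. intros i Hi; lia.
  - simpl avg.
    set (H := fun x => / INR (P (S M)) * rsum (P (S M)) (fun a => E (upd x (S M) a))).
    transitivity (avg P M (fun y => H (odo P y))).
    + apply avg_ext. intros y. unfold H. f_equal.
      rewrite (rsum_ext _ _ (fun a => E (upd (odo P y) (S M)
                 (if all_max P y (S M) then ((a + 1) mod P (S M))%nat else a))))
        by (intros a _; apply HE, odo_upd_last).
      destruct (all_max P y (S M)); [|reflexivity].
      apply (rsum_rot1 (P (S M)) (fun a => E (upd (odo P y) (S M) a))).
    + apply IH. intros x x' Hx. unfold H. f_equal. apply rsum_ext. intros a _. apply HE.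
      intros i Hi. unfold upd. destruct (Nat.eqb_spec i (S M)); auto. apply Hx; lia.
Qed.

Lemma avg_odo_iter P M l E : depends_on M E ->
  avg P M (fun y => E (Nat.iter l (odo P) y)) = avg P M E.
Proof.
  intros HE. induction l as [|l IH]; [reflexivity|]. rewrite <- IH.
  rewrite (avg_ext _ _ _ (fun y => E (Nat.iter l (odo P) (odo P y))))
    by (intros y; rewrite Nat.iter_succ_r; reflexivity).
  apply (avg_odo P M (fun y => E (Nat.iter l (odo P) y))).
  intros y y' H. apply HE, iter_agree, H.
Qed.

Lemma rsum_indicator_last n : (1 <= n)%nat -> rsum n (fun a => indR (Nat.eqb a (n - 1))) = 1.
Proof.
  intros Hn. destruct n as [|n]; [lia|].
  change (rsum (S n) (fun a => indR (Nat.eqb a (S n - 1))))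
    with (rsum n (fun a => indR (Nat.eqb a (S n - 1))) + indR (Nat.eqb n (S n - 1))).
  replace (S n - 1)%nat with n by lia. rewrite Nat.eqb_refl.
  rewrite (rsum_ext n _ (fun _ => 0)), rsum_const; [simpl; lra|].
  intros i Hi. unfold indR. destruct (Nat.eqb_spec i n); [lia|reflexivity].
Qed.

Lemma avg_all_max_le P M : (forall m, (1 <= m)%nat -> (2 <= P m)%nat) ->
  avg P M (fun y => indR (all_max P y (S M))) <= (/2) ^ M.
Proof.
  intros HP. induction M as [|M IH]; [simpl; lra|].
  simpl avg. set (n := P (S M)).
  assert (Hlast : forall y, / INR n * rsum n (fun a => indR (all_max P (upd y (S M) a) (S (S M))))
                            = / INR n * indR (all_max P y (S M))).
  { intros y. f_equal.
    rewrite (rsum_ext _ _ (fun a => indR (all_max P y (S M)) * indR (Nat.eqb a (n - 1)) + 0 * 0)).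
    - rewrite rsum_lin, rsum_indicator_last by (unfold n; specialize (HP (S M)); lia). ring.
    - intros a _. rewrite all_max_last, all_max_upd by lia. unfold upd. rewrite Nat.eqb_refl.
      fold n. unfold indR. destruct (all_max P y (S M)), (Nat.eqb a (n - 1)); simpl; ring. }
  assert (Hn : / INR n <= / 2).
  { apply Rinv_le_contravar; [lra|]. replace 2 with (INR 2) by (simpl; lra).
    apply le_INR, HP. lia. }
  apply Rle_trans with (avg P M (fun y => / 2 * indR (all_max P y (S M)) + 0 * 0)).
  - apply avg_le. intros y. rewrite Hlast.
    assert (0 <= indR (all_max P y (S M))) by (unfold indR; destruct all_max; lra).
    pose proof (inv_INR_nonneg n). nra.
  - rewrite avg_lin. simpl pow. lra.
Qed.

Lemma avg_tail1 P M : (1 <= P 1)%nat ->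
  forall F, avg P (S M) (fun y => F (tail1 y)) = avg (shift_seq P 1) M F.
Proof.
  intros HP. induction M as [|M IH]; intros F.
  - simpl. rewrite (rsum_ext _ _ (fun _ => F (fun _ => 0%nat))), rsum_const.
    + field. apply not_0_INR. lia.
    + intros a _. f_equal. apply functional_extensionality. intros m. unfold tail1, upd.
      destruct (Nat.eqb_spec m 0); auto. destruct (Nat.eqb_spec (S m) 1); auto. lia.
  - change (avg P (S (S M)) (fun y => F (tail1 y))) with
      (avg P (S M) (fun y => / INR (P (S (S M))) *
                             rsum (P (S (S M))) (fun a => F (tail1 (upd y (S (S M)) a))))).
    rewrite (avg_ext _ _ _ (fun y => (fun z => / INR (shift_seq P 1 (S M)) *
               rsum (shift_seq P 1 (S M)) (fun a => F (upd z (S M) a))) (tail1 y))).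
    + exact (IH (fun z => / INR (shift_seq P 1 (S M)) *
                          rsum (shift_seq P 1 (S M)) (fun a => F (upd z (S M) a)))).
    + intros y. simpl. f_equal. apply rsum_ext. intros a _. f_equal.
      apply functional_extensionality. intros m. unfold tail1, upd. destruct m; reflexivity.
Qed.

Lemma avg_tailn n : forall P M F, (forall m, (1 <= m <= n)%nat -> (1 <= P m)%nat) ->
  avg P (n + M) (fun y => F (tailn n y)) = avg (shift_seq P n) M F.
Proof.
  induction n as [|n IH]; intros P M F HP; [reflexivity|].
  change (avg P (S (n + M)) (fun y => F (tailn n (tail1 y))) = avg (shift_seq P (S n)) M F).
  rewrite (avg_tail1 P (n + M) ltac:(apply HP; lia) (fun z => F (tailn n z))), IH; [reflexivity|].
  intros m Hm. apply HP. lia.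
Qed.

Lemma avg_param P P' N : forall F, (forall m, (1 <= m <= N)%nat -> P m = P' m) ->
  avg P N F = avg P' N F.
Proof.
  induction N as [|N IH]; intros F H; simpl; auto.
  rewrite (H (S N)) by lia. apply IH. intros; apply H; lia.
Qed.

End Measure.

(** * Truncation estimates for the laws of Gamma *)

Section Truncation.

Lemma smorse_agree P V m M x x' : (1 <= m <= M)%nat -> agree M x x' ->
  smorse P V m x = smorse P V m x'.
Proof.
  intros Hm H. unfold smorse.
  rewrite (all_max_ext P P x x' m), H by (lia || (intros i Hi; split; [reflexivity|apply H; lia])).
  reflexivity.
Qed.

Lemma GammaM_agree P V j M y y' : agree M y y' -> GammaM P V j M y = GammaM P V j M y'.
Proof.
  intros H. unfold GammaM, birkhoff. apply nsum_ext. intros i _. unfold gammaM.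
  apply nsum_ext. intros m Hm. apply (smorse_agree P V m M); [lia|]. apply iter_agree, H.
Qed.

Lemma gammaM_trunc P V M N x : all_max P x (S M) = false -> (M <= N)%nat ->
  gammaM P V N x = gammaM P V M x.
Proof.
  intros Hx HN. induction HN as [|N HN IH]; [reflexivity|].
  unfold gammaM in *. rewrite nsum_S_r, IH. unfold smorse.
  destruct (all_max P x (1 + N)) eqn:E; [|lia].
  apply (all_max_mono P x (S M)) in E; [congruence|lia].
Qed.

Lemma GammaM_trunc P V j M N b :
  (forall l, (l < j)%nat -> all_max P (Nat.iter l (odo P) b) (S M) = false) ->
  (M <= N)%nat -> GammaM P V j N b = GammaM P V j M b.
Proof.
  intros H HN. unfold GammaM, birkhoff. apply nsum_ext. intros i Hi.
  apply gammaM_trunc; [apply H; lia|exact HN].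
Qed.

Lemma odo_param P P' M x : (forall m, (1 <= m <= M)%nat -> P m = P' m) ->
  agree M (odo P x) (odo P' x).
Proof.
  intros H i Hi. unfold odo. destruct (Nat.eqb i 0); auto.
  rewrite (all_max_ext P P' x x i), H by (lia || (intros k Hk; split; [apply H; lia|reflexivity])).
  reflexivity.
Qed.

Lemma odo_digits P M x : (forall m, (1 <= m <= M)%nat -> (1 <= P m)%nat) ->
  digits_in P M x -> digits_in P M (odo P x).
Proof.
  intros HP H m Hm. unfold odo. destruct (Nat.eqb_spec m 0); [lia|].
  destruct (all_max P x m); [apply Nat.mod_upper_bound; specialize (HP m Hm); lia|apply H; auto].
Qed.

Lemma GammaM_param P P' V V' j M b :
  (forall m, (1 <= m <= M)%nat -> (1 <= P m)%nat) ->
  (forall m, (1 <= m <= M)%nat -> P m = P' m) ->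
  (forall m a, (1 <= m <= M)%nat -> (a < P m)%nat -> V m a = V' m a) ->
  digits_in P M b -> GammaM P V j M b = GammaM P' V' j M b.
Proof.
  intros HP1 HP HS Hb. unfold GammaM, birkhoff. apply nsum_ext. intros l _.
  assert (Horbit : agree M (Nat.iter l (odo P) b) (Nat.iter l (odo P') b) /\
                   digits_in P M (Nat.iter l (odo P) b)).
  { induction l as [|l [IH1 IH2]]; [split; [intros i _; reflexivity|exact Hb]|]. simpl. split.
    - intros i Hi. rewrite (odo_agree P M _ _ IH1 i Hi). exact (odo_param P P' M _ HP i Hi).
    - apply odo_digits; auto. }
  destruct Horbit as [Hag Hdig].
  unfold gammaM. apply nsum_ext. intros m Hm. unfold smorse.
  rewrite (all_max_ext P P' _ (Nat.iter l (odo P') b) m)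
    by (intros i Hi; split; [apply HP|apply Hag]; lia).
  destruct all_max; [|reflexivity]. rewrite <- Hag by lia. apply HS; [lia|apply Hdig; lia].
Qed.

Definition law_trunc (P : nat -> nat) (V : nat -> nat -> nat) (j M : nat) (z : Z) : R :=
  prob P M (fun b => Z.eqb (Z.of_nat (GammaM P V j M b)) z).

Lemma law_trunc_local P P' V V' j M z :
  (forall m, (1 <= m <= M)%nat -> (1 <= P m)%nat) ->
  (forall m, (1 <= m <= M)%nat -> P m = P' m) ->
  (forall m a, (1 <= m <= M)%nat -> (a < P m)%nat -> V m a = V' m a) ->
  law_trunc P V j M z = law_trunc P' V' j M z.
Proof.
  intros H1 H2 H3. unfold law_trunc, prob. rewrite (avg_param P P' M) by auto.
  apply avg_ext_digits. intros y Hy. rewrite (GammaM_param P' P V' V); auto.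
  - intros m Hm; rewrite <- H2; auto.
  - intros m Hm; rewrite H2; auto.
  - intros m a Hm Ha. symmetry. apply H3; [exact Hm|]. rewrite H2; auto.
Qed.

Lemma indR_diff_le1 a b : Rabs (indR a - indR b) <= 1.
Proof. unfold indR. destruct a, b; rewrite ?Rminus_diag, ?Rabs_R0; try lra; unfold Rabs; destruct Rcase_abs; lra. Qed.

Lemma indR_nonneg a : 0 <= indR a.
Proof. unfold indR. destruct a; lra. Qed.

Lemma GammaM_event_diff P V j M N z b : (M <= N)%nat ->
  Rabs (indR (Z.eqb (Z.of_nat (GammaM P V j N b)) z) - indR (Z.eqb (Z.of_nat (GammaM P V j M b)) z))
  <= rsum j (fun l => indR (all_max P (Nat.iter l (odo P) b) (S M))).
Proof.
  intros HMN.
  destruct (existsb (fun l => all_max P (Nat.iter l (odo P) b) (S M)) (seq 0 j)) eqn:Ex.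
  - apply existsb_exists in Ex as [l [Hl Hmax]]. apply in_seq in Hl.
    apply Rle_trans with (indR (all_max P (Nat.iter l (odo P) b) (S M))).
    + rewrite Hmax. apply indR_diff_le1.
    + apply (rsum_ge_term j (fun l => indR (all_max P (Nat.iter l (odo P) b) (S M))));
        [intros; apply indR_nonneg|lia].
  - assert (Hnone : forall l, (l < j)%nat -> all_max P (Nat.iter l (odo P) b) (S M) = false).
    { intros l Hl. destruct (all_max P (Nat.iter l (odo P) b) (S M)) eqn:E; [|reflexivity].
      rewrite <- Ex. symmetry. apply existsb_exists. exists l. split; [apply in_seq; lia|exact E]. }
    rewrite (GammaM_trunc P V j M N b Hnone HMN), Rminus_diag, Rabs_R0.
    apply rsum_nonneg. intros; apply indR_nonneg.
Qed.

Definition rate (j M : nat) : R := INR j * (/2) ^ M.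

Lemma rate_cv0 j : Un_cv (rate j) 0.
Proof.
  apply (Un_cv_ext (fun M => INR j / 2 ^ M)); [|apply cv_pow_half].
  intros M. unfold rate, Rdiv. rewrite pow_inv. reflexivity.
Qed.

Lemma law_trunc_cauchy P V j M N z : (forall m, (1 <= m)%nat -> (2 <= P m)%nat) -> (M <= N)%nat ->
  Rabs (law_trunc P V j N z - law_trunc P V j M z) <= rate j M.
Proof.
  intros HP HMN.
  assert (Hext : forall F, depends_on M F -> avg P N F = avg P M F).
  { intros F HF. replace N with ((N - M) + M)%nat by lia.
    apply avg_extend; [exact HF|intros m Hm; specialize (HP m Hm); lia]. }
  assert (Hmax_dep : depends_on M (fun y => indR (all_max P y (S M)))).
  { intros y y' H. rewrite (all_max_ext P P y y' (S M)) by (intros i Hi; split; [reflexivity|apply H; lia]).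
    reflexivity. }
  unfold law_trunc, prob.
  change (fun b => if Z.eqb (Z.of_nat (GammaM P V j M b)) z then 1 else 0)
    with (fun b => indR (Z.eqb (Z.of_nat (GammaM P V j M b)) z)).
  rewrite <- (Hext (fun b => indR (Z.eqb (Z.of_nat (GammaM P V j M b)) z)))
    by (intros y y' H; rewrite (GammaM_agree P V j M y y' H); reflexivity).
  eapply Rle_trans; [apply avg_abs_diff_le; intros b; apply (GammaM_event_diff P V j M N z b HMN)|].
  rewrite avg_rsum. unfold rate. rewrite <- rsum_const. apply rsum_le. intros l _.
  rewrite (Hext (fun b => indR (all_max P (Nat.iter l (odo P) b) (S M))))
    by (intros y y' H; apply Hmax_dep, iter_agree, H).
  rewrite (avg_odo_iter P M l (fun b => indR (all_max P b (S M))) Hmax_dep).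
  apply avg_all_max_le, HP.
Qed.

End Truncation.

(** * Limits *)

Section Limits.

Lemma cv_with_rate (u e : nat -> R) :
  Un_cv e 0 -> (forall M N, (M <= N)%nat -> Rabs (u N - u M) <= e M) ->
  exists l, Un_cv u l /\ forall M, Rabs (l - u M) <= e M.
Proof.
  intros He H.
  assert (Hcau : Cauchy_crit u).
  { intros eps Heps. destruct (He (eps / 2)) as [K HK]; [lra|]. exists K. intros n m Hn Hm.
    specialize (HK K (le_n K)). unfold Rdist in *. rewrite Rminus_0_r in HK.
    pose proof (Rle_abs (e K)). pose proof (H K n Hn). pose proof (H K m Hm).
    replace (u n - u m) with ((u n - u K) - (u m - u K)) by ring.
    eapply Rle_lt_trans; [apply Rabs_triang|]. rewrite Rabs_Ropp. lra. }
  destruct (R_complete u Hcau) as [l Hl]. exists l. split; [exact Hl|].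
  intros M. apply Rle_plus_epsilon. intros eps Heps.
  destruct (Hl eps Heps) as [N1 HN1]. set (n := Nat.max N1 M).
  specialize (HN1 n ltac:(unfold n; lia)). unfold Rdist in HN1.
  specialize (H M n ltac:(unfold n; lia)).
  replace (l - u M) with ((l - u n) + (u n - u M)) by ring.
  eapply Rle_trans; [apply Rabs_triang|]. rewrite Rabs_minus_sym. lra.
Qed.

Lemma cv_of_uniform_approx (u : nat -> R) (l : R) (a : nat -> nat -> R) (b e : nat -> R) :
  Un_cv e 0 ->
  (forall k M, Rabs (u k - a k M) <= e M) ->
  (forall M, Rabs (l - b M) <= e M) ->
  (forall M, exists K, forall k, (K <= k)%nat -> a k M = b M) ->
  Un_cv u l.
Proof.
  intros He Hu Hl Hab eps Heps.
  destruct (He (eps / 2)) as [M HM]; [lra|]. specialize (HM M (le_n M)).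
  unfold Rdist in HM. rewrite Rminus_0_r in HM. pose proof (Rle_abs (e M)).
  destruct (Hab M) as [K HK]. exists K. intros k Hk. unfold Rdist.
  specialize (Hu k M). specialize (Hl M). rewrite HK in Hu by lia.
  replace (u k - l) with ((u k - b M) - (l - b M)) by ring.
  eapply Rle_lt_trans; [apply Rabs_triang|]. rewrite Rabs_Ropp. lra.
Qed.

Lemma prob_X_trunc p s n j z M : (forall m, (1 <= m)%nat -> (1 <= p m)%nat) ->
  prob p (M + n) (fun y => Z.eqb (X_trunc p s n j (M + n) y) z) =
  law_trunc (shift_seq p n) (shift_seq s n) j M z.
Proof.
  intros Hp. unfold law_trunc, prob. rewrite Nat.add_comm.
  rewrite <- (avg_tailn n p M (fun b => if Z.eqb (Z.of_nat (GammaM (shift_seq p n) (shift_seq s n) j M b)) z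
                                        then 1 else 0)) by (intros m Hm; apply Hp; lia).
  apply avg_ext_digits. intros y Hy.
  rewrite X_trunc_renormalize by ((intros m Hm; split; [apply Hp|apply Hy]; lia) || lia).
  replace (n + M - n)%nat with M by lia. reflexivity.
Qed.

Lemma law_X_limit p s n j z : (forall m, (1 <= m)%nat -> (2 <= p m)%nat) ->
  exists l, Un_cv (fun N => prob p N (fun y => Z.eqb (X_trunc p s n j N y) z)) l /\
    forall M, Rabs (l - law_trunc (shift_seq p n) (shift_seq s n) j M z) <= rate j M.
Proof.
  intros Hp.
  destruct (cv_with_rate (fun M => law_trunc (shift_seq p n) (shift_seq s n) j M z) (rate j))
    as [l [Hl Hrate]].
  - apply rate_cv0.
  - intros M N HMN. apply law_trunc_cauchy; [intros m Hm; apply Hp; unfold shift_seq; lia|exact HMN].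
  - exists l. split; [|exact Hrate]. apply CV_shift with n.
    apply (Un_cv_ext (fun M => law_trunc (shift_seq p n) (shift_seq s n) j M z)); [|exact Hl].
    intros M. symmetry. apply prob_X_trunc. intros m Hm. specialize (Hp m Hm). lia.
Qed.

Lemma law_Gamma_limit pi eta j z : (forall m, (1 <= m)%nat -> (2 <= pibar pi m)%nat) ->
  exists l, Un_cv (fun N => prob (pibar pi) N (fun y => Z.eqb (Gamma_trunc pi eta j N y) z)) l /\
    forall M, Rabs (l - law_trunc (pibar pi) (etabar eta) j M z) <= rate j M.
Proof.
  intros Hp.
  destruct (cv_with_rate (fun M => law_trunc (pibar pi) (etabar eta) j M z) (rate j))
    as [l [Hl Hrate]].
  - apply rate_cv0.
  - intros M N HMN. apply law_trunc_cauchy; assumption.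
  - exists l. split; [exact Hl|exact Hrate].
Qed.

Lemma eventually_forall_below (Q : nat -> nat -> Prop) b :
  (forall i, (i < b)%nat -> exists K, forall k, (K <= k)%nat -> Q i k) ->
  exists K, forall k, (K <= k)%nat -> forall i, (i < b)%nat -> Q i k.
Proof.
  induction b as [|b IH]; intros H; [exists 0%nat; intros; lia|].
  destruct IH as [K1 HK1]; [intros; apply H; lia|].
  destruct (H b (le_n _)) as [K2 HK2].
  exists (Nat.max K1 K2). intros k Hk i Hi.
  destruct (Nat.eq_dec i b) as [->|]; [apply HK2; lia|apply HK1; lia].
Qed.

Section Stabilizing.
Variables (p : nat -> nat) (s : nat -> nat -> nat) (nk : nat -> nat)
          (pi : Z -> nat) (eta : Z -> nat -> nat).
Hypothesis Hp : forall n, (1 <= n)%nat -> (2 <= p n)%nat.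
Hypothesis Hpi : forall m : Z, exists K, forall k, (K <= k)%nat ->
  (1 <= Z.of_nat (nk k) + m)%Z /\ p (Z.to_nat (Z.of_nat (nk k) + m)) = pi m.
Hypothesis Heta : forall (m : Z) (j : nat), (j < pi m)%nat -> exists K, forall k, (K <= k)%nat ->
  (1 <= Z.of_nat (nk k) + m)%Z /\ s (Z.to_nat (Z.of_nat (nk k) + m)) j = eta m j.

Lemma nk_index k m : Z.to_nat (Z.of_nat (nk k) + Z.of_nat m) = (nk k + m)%nat.
Proof. rewrite <- Nat2Z.inj_add, Nat2Z.id. reflexivity. Qed.

Lemma limit_sizes_ge2 m : (1 <= m)%nat -> (2 <= pibar pi m)%nat.
Proof.
  intros Hm. destruct (Hpi (Z.of_nat m)) as [K HK]. destruct (HK K (le_n K)) as [_ E].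
  unfold pibar. rewrite <- E, nk_index. apply Hp. lia.
Qed.

Lemma stabilizing_digit m : exists K, forall k, (K <= k)%nat ->
  shift_seq p (nk k) m = pibar pi m /\
  forall a, (a < pibar pi m)%nat -> shift_seq s (nk k) m a = etabar eta m a.
Proof.
  destruct (Hpi (Z.of_nat m)) as [K1 HK1].
  destruct (eventually_forall_below (fun a k => s (nk k + m)%nat a = eta (Z.of_nat m) a)
              (pi (Z.of_nat m))) as [K2 HK2].
  { intros a Ha. destruct (Heta (Z.of_nat m) a Ha) as [K HK]. exists K. intros k Hk.
    destruct (HK k Hk) as [_ E]. rewrite nk_index in E. exact E. }
  exists (Nat.max K1 K2). intros k Hk. destruct (HK1 k ltac:(lia)) as [_ E].
  rewrite nk_index in E. split; [exact E|]. intros a Ha. apply HK2; [lia|exact Ha].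
Qed.

Lemma law_trunc_stabilizes j M z : exists K, forall k, (K <= k)%nat ->
  law_trunc (shift_seq p (nk k)) (shift_seq s (nk k)) j M z = law_trunc (pibar pi) (etabar eta) j M z.
Proof.
  destruct (eventually_forall_below (fun m k => shift_seq p (nk k) m = pibar pi m /\
              forall a, (a < pibar pi m)%nat -> shift_seq s (nk k) m a = etabar eta m a)
              (S M)) as [K HK].
  { intros m _. apply stabilizing_digit. }
  exists K. intros k Hk. apply law_trunc_local.
  - intros m Hm. unfold shift_seq. specialize (Hp (nk k + m)%nat). lia.
  - intros m Hm. apply (HK k Hk m). lia.
  - intros m a Hm Ha. destruct (HK k Hk m ltac:(lia)) as [E Hs]. apply Hs. rewrite <- E. exact Ha.
Qed.

End Stabilizing.

End Limits.

Theorem mainTheorem15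
  (p : nat -> nat) (s : nat -> nat -> nat) (nk : nat -> nat)
  (pi : Z -> nat) (eta : Z -> nat -> nat) :
  (forall n, (1 <= n)%nat -> (2 <= p n)%nat) ->
  (* integrability of f = 1 + sum_n s_n *)
  (exists B : R, forall N : nat,
      rsum N (fun i => INR (nsum 0 (p (S i)) (s (S i))) / INR (q p (S i))) <= B) ->
  (* (n_k) is a stabilizing subsequence with limit parameters pi, eta *)
  (forall k, (nk k < nk (S k))%nat) ->
  (forall m : Z, exists K, forall k, (K <= k)%nat ->
      (1 <= Z.of_nat (nk k) + m)%Z /\ p (Z.to_nat (Z.of_nat (nk k) + m)) = pi m) ->
  (forall (m : Z) (j : nat), (j < pi m)%nat -> exists K, forall k, (K <= k)%nat ->
      (1 <= Z.of_nat (nk k) + m)%Z /\ s (Z.to_nat (Z.of_nat (nk k) + m)) j = eta m j) ->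
  forall j : nat, (1 <= j)%nat ->
  exists (mu : nat -> Z -> R) (P : Z -> R),
    (* mu k z = nu( f^{(j q_{n_k})} - j h_{n_k+1} = z ) *)
    (forall k z, Un_cv (fun N => prob p N
        (fun y => Z.eqb (X_trunc p s (nk k) j N y) z)) (mu k z)) /\
    (* P z = P_j({z}) = nubar( gamma + ... + gamma o Sbar^{j-1} = z ) *)
    (forall z, Un_cv (fun N => prob (pibar pi) N
        (fun y => Z.eqb (Gamma_trunc pi eta j N y) z)) (P z)) /\
    (* weak convergence of probabilities on Z: pointwise convergence of masses *)
    (forall z, Un_cv (fun k => mu k z) (P z)).
Proof.
  intros Hp _ _ Hpi Heta j _.
  destruct (functional_choice _ (fun kz => law_X_limit p s (nk (fst kz)) j (snd kz) Hp))
    as [mu Hmu].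
  destruct (functional_choice _ (fun z => law_Gamma_limit pi eta j z
                                   (limit_sizes_ge2 p nk pi Hp Hpi))) as [P HP].
  exists (fun k z => mu (k, z)), P. split; [|split].
  - intros k z. exact (proj1 (Hmu (k, z))).
  - intros z. exact (proj1 (HP z)).
  - intros z.
    apply (cv_of_uniform_approx _ _
             (fun k M => law_trunc (shift_seq p (nk k)) (shift_seq s (nk k)) j M z)
             (fun M => law_trunc (pibar pi) (etabar eta) j M z) (rate j)).
    + apply rate_cv0.
    + intros k M. exact (proj2 (Hmu (k, z)) M).
    + intros M. exact (proj2 (HP z) M).
    + intros M. exact (law_trunc_stabilizes p s nk pi eta Hp Hpi Heta j M z).
Qed.
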